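(* Let $H=H(\mathcal{P})=(V,E)$ be the Hasse diagram of a finite poset $\mathcal{P}$ and $\phi\colon E\to\mathbf{Z}^+$ an edge coloring. Let $I=I(\mathcal{P},\phi)$ be the SM instance produced by $\mathsf{ConstructInstance}(H,\phi)$ (described below). Then all men's preference lists in $I$ have length at most $3$ if and only if $\phi$ is a proper in-coloring, and all women's preference lists in $I$ have length at most $3$ if and only if $\phi$ is a proper out-coloring.
   Context: An edge coloring $\phi$ of a directed graph is a proper in-coloring if any two distinct edges entering the same vertex receive different colors, and a proper out-coloring if any two distinct edges leaving the same vertex receive different colors. Construction $\mathsf{ConstructInstance}(H,\phi)$ with $V=\{1,\dots,p\}$: for each $v$, let $C_v$ be the set of colors of edges incident to $v$ (entering or leaving); if $|C_v|<2$, add colors from $\{1,2\}$ to $C_v$ until $|C_v|=2$. For each $v$ and $c\in C_v$ create a man $m_{c,v}$ and a woman $w_{c,v}$. Fix an arbitrary cyclic ordering of $C_v$ and for $c\in C_v$ let $c^+$, $c^-$ be the next and previous colors. The preference list of $m_{c,v}$ is: $w_{c,v}$, then the women $w_{c,u}$ for all edges $(u,v)\in E$ with $\phi((u,v))=c$ (in some order), then $w_{c^+,v}$. The preference list of $w_{c,v}$ is: $m_{c^-,v}$, then the men $m_{c,y}$ for all edges $(v,y)\in E$ with $\phi((v,y))=c$ (in some order), then $m_{c,v}$. No other pairs are acceptable. *)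

From mathcomp Require Import all_boot all_order.
Set Implicit Arguments. Unset Strict Implicit. Unset Printing Implicit Defensive.
Import Order.TTheory.
Local Open Scope order_scope.

Section Construct.
Variables (d : Order.disp_t) (T : finPOrderType d).

Definition hasse_edges : {set T * T} :=
  [set e : T * T | (e.1 < e.2) && ~~ [exists w : T, (e.1 < w) && (w < e.2)]].

(* An edge colouring is a map phi : T * T -> nat; only its values on
   hasse_edges matter (positivity is assumed in the theorem). *)
Variable phi : T * T -> nat.

Definition proper_in_coloring (E : {set T * T}) :=
  forall e1 e2, e1 \in E -> e2 \in E -> e1 <> e2 -> e1.2 = e2.2 -> phi e1 <> phi e2.

Definition proper_out_coloring (E : {set T * T}) :=
  forall e1 e2, e1 \in E -> e2 \in E -> e1 <> e2 -> e1.1 = e2.1 -> phi e1 <> phi e2.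

Definition incident_colors (E : {set T * T}) (v : T) : seq nat :=
  undup [seq phi e | e <- enum E & (e.1 == v) || (e.2 == v)].

(* C_v, padded with colours from {1,2} up to size 2, listed in increasing
   order; this list is the (fixed) cyclic ordering of C_v. *)
Definition Cv (E : {set T * T}) (v : T) : seq nat :=
  let s := incident_colors E v in
  if 2 <= size s then sort leq s
  else if s is [:: c] then sort leq [:: c; if c == 1%N then 2%N else 1%N]
  else [:: 1%N; 2%N].

(* A man m_{c,v} and a woman w_{c,v} are both represented by the pair (c,v). *)
Definition man_pref (E : {set T * T}) (c : nat) (v : T) : seq (nat * T) :=
  (c, v) :: [seq (c, e.1) | e <- enum E & (e.2 == v) && (phi e == c)]
         ++ [:: (next (Cv E v) c, v)].

Definition woman_pref (E : {set T * T}) (c : nat) (v : T) : seq (nat * T) :=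
  (prev (Cv E v) c, v) :: [seq (c, e.2) | e <- enum E & (e.1 == v) && (phi e == c)]
         ++ [:: (c, v)].

End Construct.

From mathcomp Require Import all_boot all_order.
Set Implicit Arguments. Unset Strict Implicit. Unset Printing Implicit Defensive.

(* Besides its first choice w_{c,v} and its last choice w_{c^+,v}, the list of
   m_{c,v} has one entry per edge of colour c entering v, so it has length at
   most 3 iff at most one such edge exists.  Since the colour of every edge
   entering v lies in C_v, requiring this for all c in C_v says exactly that
   no two edges entering v share a colour.  Dually for women and leaving
   edges. *)

Lemma uniq_size_le1P (U : eqType) (s : seq U) : uniq s ->
  size s <= 1 <-> {in s &, forall x y, x = y}.
Proof.
case: s => [|a [|b t]] uniq_s; split=> //.
  by move=> _ x y; rewrite !inE => /eqP -> /eqP ->.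
move: uniq_s => /andP[]; rewrite inE negb_or => /andP[/eqP neq_ab _] _ eq_s.
by exfalso; apply/neq_ab/eq_s; rewrite !inE eqxx ?orbT.
Qed.

Section ColoredEdges.
Variables (d : Order.disp_t) (T : finPOrderType d).
Variables (phi : T * T -> nat) (E : {set T * T}).

Definition colored_edges (endpoint : T * T -> T) (v : T) (c : nat) :=
  [seq e <- enum E | (endpoint e == v) && (phi e == c)].

Lemma size_man_pref c v :
  size (man_pref phi E c v) = (size (colored_edges snd v c)).+2.
Proof. by rewrite /= size_cat size_map addn1. Qed.

Lemma size_woman_pref c v :
  size (woman_pref phi E c v) = (size (colored_edges fst v c)).+2.
Proof. by rewrite /= size_cat size_map addn1. Qed.

Lemma incident_colors_sub_Cv v : {subset incident_colors phi E v <= Cv phi E v}.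
Proof.
rewrite /Cv => c; case: ifP => [_|]; first by rewrite mem_sort.
case: (incident_colors phi E v) => [|a [|b t]] //=.
by move=> _; rewrite inE => /eqP ->; rewrite mem_sort inE eqxx.
Qed.

Lemma color_in_Cv_src e : e \in E -> phi e \in Cv phi E e.1.
Proof.
move=> Ee; apply/incident_colors_sub_Cv; rewrite mem_undup.
by apply/mapP; exists e; rewrite // mem_filter mem_enum Ee eqxx.
Qed.

Lemma color_in_Cv_tgt e : e \in E -> phi e \in Cv phi E e.2.
Proof.
move=> Ee; apply/incident_colors_sub_Cv; rewrite mem_undup.
by apply/mapP; exists e; rewrite // mem_filter mem_enum Ee eqxx orbT.
Qed.

Lemma colored_edges_le1P (endpoint : T * T -> T) :
  (forall e, e \in E -> phi e \in Cv phi E (endpoint e)) ->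
  (forall v c, c \in Cv phi E v -> size (colored_edges endpoint v c) <= 1)
  <-> (forall e1 e2, e1 \in E -> e2 \in E -> e1 <> e2 ->
         endpoint e1 = endpoint e2 -> phi e1 <> phi e2).
Proof.
move=> color_in_Cv; have uniq_ce v c : uniq (colored_edges endpoint v c).
  exact/filter_uniq/enum_uniq.
split=> [le1 e1 e2 Ee1 Ee2 neq_e end_e color_e | proper v c _].
  have /le1/(uniq_size_le1P (uniq_ce _ _)) eq_ce := color_in_Cv _ Ee1.
  apply/neq_e/eq_ce;
  by rewrite mem_filter mem_enum ?Ee1 ?Ee2 -?end_e -?color_e !eqxx.
apply/(uniq_size_le1P (uniq_ce v c)) => e1 e2.
rewrite !(mem_filter _ _ (enum E)) !mem_enum.
move=> /andP[/andP[/eqP end1 /eqP color1] Ee1].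
move=> /andP[/andP[/eqP end2 /eqP color2] Ee2].
have [// | /eqP neq_e] := eqVneq e1 e2; exfalso.
by apply: (proper e1 e2 Ee1 Ee2 neq_e); rewrite ?end1 ?end2 ?color1 ?color2.
Qed.

End ColoredEdges.

Theorem proposition4p1 (d : Order.disp_t) (T : finPOrderType d)
    (phi : T * T -> nat)
    (phi_pos : forall e, e \in hasse_edges T -> (0 < phi e)%N) :
  ((forall (v : T) (c : nat), c \in Cv phi (hasse_edges T) v ->
      (size (man_pref phi (hasse_edges T) c v) <= 3)%N)
     <-> proper_in_coloring phi (hasse_edges T))
  /\
  ((forall (v : T) (c : nat), c \in Cv phi (hasse_edges T) v ->
      (size (woman_pref phi (hasse_edges T) c v) <= 3)%N)
     <-> proper_out_coloring phi (hasse_edges T)).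
Proof.
split.
  apply: iff_trans (colored_edges_le1P (@color_in_Cv_tgt _ _ phi _)).
  by split=> le3 v c /le3; rewrite size_man_pref.
apply: iff_trans (colored_edges_le1P (@color_in_Cv_src _ _ phi _)).
by split=> le3 v c /le3; rewrite size_woman_pref.
Qed.
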